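(* Let $\gamma>0$, $a\in\mathbb{C}$ and $f\in\mathcal{H}_\gamma$. Then $$\mathcal{W}^{\gamma,a}_{RBF}f(z)=\exp\left(\frac{a^2-|a|^2}{\gamma^2}+\frac{2z(\overline a-a)}{\gamma^2}\right)f(z-a),\quad z\in\mathbb{C}.$$ Moreover, $\mathcal{W}^{\gamma,a}_{RBF}$ coincides with the translation operator $T_a[f](z):=f(z-a)$ (i.e. $\mathcal{W}^{\gamma,a}_{RBF}f=T_af$ for all $f\in\mathcal{H}_\gamma$) if and only if $a\in\mathbb{R}$.
   Context: For $\alpha>0$, $\mathcal{F}_\alpha$ is the Fock space of entire $f$ with $\frac{\alpha}{\pi}\int_{\mathbb{C}}|f|^2e^{-\alpha|z|^2}dA<\infty$, and $\mathcal{W}^\alpha_af(z)=f(z-a)\exp\left(\alpha\left(z\overline a-\frac{|a|^2}{2}\right)\right)$ is the Weyl operator on $\mathcal{F}_\alpha$. $\mathcal{H}_\gamma$ is the Hilbert space of entire $f$ with $\frac{2}{\pi\gamma^2}\int_{\mathbb{C}}|f(z)|^2\exp\left(\frac{(z-\overline z)^2}{\gamma^2}\right)dA(z)<\infty$. With $\mathcal{M}^{\gamma^2}_{RBF}f=e^{z^2/\gamma^2}f$ and $\mathcal{M}^{-\gamma^2}_{RBF}g=e^{-z^2/\gamma^2}g$, the RBF-Weyl operator is $\mathcal{W}^{\gamma,a}_{RBF}:=\mathcal{M}^{-\gamma^2}_{RBF}\circ\mathcal{W}^{2/\gamma^2}_a\circ\mathcal{M}^{\gamma^2}_{RBF}$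 on $\mathcal{H}_\gamma$. *)

From HB Require Import structures.
From mathcomp Require Import all_boot all_order all_algebra.
From mathcomp Require Import all_classical all_reals all_analysis.
From mathcomp Require Import complex.
Set Implicit Arguments. Unset Strict Implicit. Unset Printing Implicit Defensive.
Import Order.TTheory GRing.Theory Num.Theory.
Local Open Scope ring_scope.
Local Open Scope complex_scope.

Section Defs.
Variable R : realType.

Definition cexp (z : R[i]) : R[i] :=
  (expR (complex.Re z) * cos (complex.Im z)) +i*
  (expR (complex.Re z) * sin (complex.Im z)).

Definition cdifferentiable_at (f : R[i] -> R[i]) (z0 : R[i]) : Prop :=
  exists L : R[i], forall eps : R, 0 < eps -> exists delta : R, 0 < delta /\
    forall h : R[i], h != 0 -> `|h| < delta%:C ->
      `|(f (z0 + h) - f z0) / h - L| < eps%:C.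

Definition entire (f : R[i] -> R[i]) : Prop := forall z, cdifferentiable_at f z.

(* identification of (x, y) in R x R with x + iy; Lebesgue measure on C is
   the product Lebesgue measure on R x R *)
Definition cplx_of (p : R * R) : R[i] := p.1 +i* p.2.

Definition H_weight (gamma : R) (f : R[i] -> R[i]) (p : R * R) : R :=
  let z := cplx_of p in
  (2 / (pi * gamma ^+ 2)) * (complex.Re (f z) ^+ 2 + complex.Im (f z) ^+ 2) *
  expR (complex.Re ((z - z^*) ^+ 2) / gamma ^+ 2).

Definition in_H (gamma : R) (f : R[i] -> R[i]) : Prop :=
  entire f /\
  (\int[(@lebesgue_measure R) \x (@lebesgue_measure R)]_(p in setT)
      (H_weight gamma f p)%:E < +oo)%E.

Definition Weyl (alpha : R) (a : R[i]) (f : R[i] -> R[i]) : R[i] -> R[i] :=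
  fun z => f (z - a) * cexp (alpha%:C * (z * a^* - `|a| ^+ 2 / 2%:R)).

Definition M_RBF (gamma : R) (f : R[i] -> R[i]) : R[i] -> R[i] :=
  fun z => cexp (z ^+ 2 / (gamma ^+ 2)%:C) * f z.
Definition M_RBF_inv (gamma : R) (g : R[i] -> R[i]) : R[i] -> R[i] :=
  fun z => cexp (- (z ^+ 2 / (gamma ^+ 2)%:C)) * g z.

Definition RBF_Weyl (gamma : R) (a : R[i]) (f : R[i] -> R[i]) : R[i] -> R[i] :=
  M_RBF_inv gamma (Weyl (2 / gamma ^+ 2) a (M_RBF gamma f)).

Definition transl (a : R[i]) (f : R[i] -> R[i]) : R[i] -> R[i] :=
  fun z => f (z - a).

End Defs.

From HB Require Import structures.
From mathcomp Require Import all_boot all_order all_algebra.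
From mathcomp Require Import all_classical all_reals all_analysis.
From mathcomp Require Import complex ring lra measurable_realfun.
Set Implicit Arguments. Unset Strict Implicit. Unset Printing Implicit Defensive.
Import Order.TTheory GRing.Theory Num.Theory Normc.
Local Open Scope ring_scope.
Local Open Scope complex_scope.

(* Composing the three factors of the RBF-Weyl operator, the exponents
   -z^2/gamma^2 + (z-a)^2/gamma^2 + (2/gamma^2)(z conj(a) - |a|^2/2) add up to
   the exponent of the statement, which vanishes when a is real.  Conversely,
   evaluating W f = T_a f at z = 0 on the Gaussian f(z) = exp(-z^2/gamma^2)
   gives exp((a^2 - |a|^2)/gamma^2) = 1, and the real part of this exponent is
   -2 (Im a)^2/gamma^2.  The Gaussian lies in H_gamma: its weighted squared
   modulus is a product of two normal densities, and it is entire by the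
   bound |e^u - 1 - u| <= C |u|^2 for |u| <= 1, obtained from mean value
   estimates for exp, sin and cos. *)

Section RealTaylorBounds.
Import numFieldNormedType.Exports.
Local Open Scope classical_set_scope.
Variable R : realType.
Implicit Types x y B : R.

Lemma mvt_le_norm (f df : R -> R) x B :
  (forall c : R, is_derive c 1 f (df c)) ->
  (forall c, `|c| <= `|x| -> `|df c| <= B) -> `|f x - f 0| <= B * `|x|.
Proof.
move=> fD dfB.
have fC a b : {within `[a, b], continuous f}.
  apply: continuous_subspaceT => c; apply: differentiable_continuous.
  exact/derivable1_diffP/(@ex_derive _ _ _ c 1 f (df c) (fD c)).
have [x0|x0] := leP 0 x.
  have [c] := MVT_segment x0 (fun c _ => fD c) (fC 0 x).
  rewrite in_itv /= => /andP[c0 cx] ->.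
  rewrite subr0 normrM ler_wpM2r // dfB // !ger0_norm // (le_trans c0 cx).
have [c] := MVT_segment (ltW x0) (fun c _ => fD c) (fC x 0).
rewrite in_itv /= => /andP[xc c0] fxE.
rewrite distrC fxE sub0r normrM normrN ler_wpM2r // dfB //.
by rewrite !ler0_norm ?lerN2 // (le_trans xc c0).
Qed.

Lemma ler_norm_sin y : `|sin y| <= `|y|.
Proof.
have := @mvt_le_norm sin cos y 1 (@is_derive_sin R) (fun c _ => cos_max c).
by rewrite sin0 subr0 mul1r.
Qed.

Lemma ler_norm_cos_sub1 y : `|cos y - 1| <= y ^+ 2.
Proof.
have := @mvt_le_norm cos (fun c => - sin c) y `|y| (@is_derive_cos R).
rewrite cos0 -normrM -expr2 ger0_norm ?sqr_ge0 //; apply=> c cy.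
by rewrite normrN (le_trans (ler_norm_sin c)).
Qed.

Lemma ler_norm_sin_subid y : `|sin y - y| <= `|y| ^+ 3.
Proof.
have sD (c : R) : is_derive c 1 (fun t => sin t - t) (cos c - 1).
  exact: is_deriveB.
have := @mvt_le_norm _ _ y (`|y| ^+ 2) sD.
rewrite sin0 subr0 subr0 -exprSr; apply=> c cy.
rewrite (le_trans (ler_norm_cos_sub1 c)) // -real_normK ?num_real //.
by rewrite ler_sqr ?nnegrE.
Qed.

Lemma ler_norm_expR_sub1 x : `|expR x - 1| <= expR `|x| * `|x|.
Proof.
have := @mvt_le_norm expR expR x (expR `|x|) (@is_derive_expR R).
rewrite expR0; apply=> c cx.
by rewrite ger0_norm ?expR_ge0 // ler_expR (le_trans (ler_norm c)).
Qed.

Lemma ler_norm_expR_sub1_subid x : `|expR x - 1 - x| <= expR `|x| * x ^+ 2.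
Proof.
have eD (c : R) : is_derive c 1 (fun t => expR t - t) (expR c - 1).
  exact: is_deriveB.
have := @mvt_le_norm _ _ x (expR `|x| * `|x|) eD.
rewrite expR0 subr0 -mulrA -expr2 real_normK ?num_real // addrAC; apply=> c cx.
apply: (le_trans (ler_norm_expR_sub1 c)).
by apply: ler_pM; rewrite ?expR_ge0 ?normr_ge0 ?ler_expR.
Qed.

End RealTaylorBounds.

Section ComplexNorm.
Variable R : realType.
Implicit Types w : R[i].

Lemma normc_ge0 w : 0 <= normc w.
Proof. by case: w => a b; exact: sqrtr_ge0. Qed.

Lemma normr_normc w : `|w| = (normc w : R)%:C.
Proof. by case: w => a b; rewrite normc_def. Qed.

Lemma ltc_normc w (e : R) : (`|w| < e%:C) = (normc w < e).
Proof. by rewrite normr_normc ltcR. Qed.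

Lemma normc_gt0 w : w != 0 -> 0 < normc w.
Proof.
by move=> w0; rewrite lt_def normc_ge0 andbT; apply: contra_neq w0 => /eq0_normc.
Qed.

Lemma normc_complex_le (a b : R) : normc (a +i* b) <= `|a| + `|b|.
Proof.
rewrite /= -[X in _ <= X]ger0_norm ?addr_ge0 // -sqrtr_sqr ler_wsqrtr //.
rewrite -[a ^+ 2]real_normK ?num_real // -[b ^+ 2]real_normK ?num_real //.
by have := normr_ge0 a; have := normr_ge0 b; nra.
Qed.

End ComplexNorm.

Section ComplexExponential.
Variable R : realType.
Implicit Types u v w : R[i].

Lemma cexpD u v : cexp (u + v) = cexp u * cexp v.
Proof.
case: u => x y; case: v => x' y'; rewrite /cexp /=; simpc.
by rewrite expRD cosD sinD; congr (_ +i* _); ring.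
Qed.

Lemma cexp0 : cexp (0 : R[i]) = 1.
Proof. by rewrite /cexp /= expR0 cos0 sin0 mulr1 mulr0. Qed.

Lemma cexp_neq0 w : cexp w != 0.
Proof.
have := @oner_neq0 R[i]; apply: contra_neq => w0.
by rewrite -cexp0 -[X in cexp X](subrr w) cexpD w0 mul0r.
Qed.

Lemma sqr_Re_Im_cexp w :
  complex.Re (cexp w) ^+ 2 + complex.Im (cexp w) ^+ 2 = expR (complex.Re w) ^+ 2.
Proof. by rewrite /cexp /= !exprMn -mulrDr cos2Dsin2 mulr1. Qed.

Lemma cexp_eq1 w : cexp w = 1 -> complex.Re w = 0.
Proof.
move=> w1; have := sqr_Re_Im_cexp w; rewrite w1 /= expr0n expr1n addr0.
move/esym/eqP; rewrite sqrf_eq1 => /orP[/eqP|/eqP] e.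
  by rewrite -[RHS]expR0 in e; exact: expR_inj e.
by have := expR_gt0 (complex.Re w); rewrite e; lra.
Qed.

Lemma normc_cexp_sub1_subid u : normc u <= 1 ->
  normc (cexp u - 1 - u) <= (expR 1 *+ 2 + 1) * normc u ^+ 2.
Proof.
case: u => x y /=; set r2 := x ^+ 2 + y ^+ 2 => r1.
have r0 : 0 <= r2 by rewrite addr_ge0 ?sqr_ge0.
rewrite sqr_sqrtr //.
have {}r1 : r2 <= 1 by rewrite -(@ler_sqrt _ _ 1) ?sqrtr1.
have xr : `|x| ^+ 2 <= r2 by rewrite real_normK ?num_real // lerDl sqr_ge0.
have yr : `|y| ^+ 2 <= r2 by rewrite real_normK ?num_real // lerDr sqr_ge0.
have x1 : `|x| <= 1 by rewrite -(@ler_pXn2r _ 2) ?nnegrE // expr1n (le_trans xr).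
have y1 : `|y| <= 1 by rewrite -(@ler_pXn2r _ 2) ?nnegrE // expr1n (le_trans yr).
have e1 : expR `|x| <= expR 1 by rewrite ler_expR.
have xyr : `|x| * `|y| <= r2.
  have : `|x| ^+ 2 + `|y| ^+ 2 = r2 by rewrite !real_normK ?num_real.
  by have := normr_ge0 x; have := normr_ge0 y; nra.
have Re_le : `|expR x * cos y - 1 - x| <= expR 1 * r2.
  have -> : expR x * cos y - 1 - x = (expR x - 1 - x) + expR x * (cos y - 1) by ring.
  rewrite (le_trans (ler_normD _ _)) // normrM ger0_norm ?expR_ge0 // /r2 mulrDr.
  apply: lerD.
    apply: (le_trans (ler_norm_expR_sub1_subid x)).
    by apply: ler_pM; rewrite ?expR_ge0 ?sqr_ge0.
  apply: ler_pM; rewrite ?expR_ge0 ?normr_ge0 ?ler_norm_cos_sub1 //.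
  by rewrite ler_expR (le_trans (ler_norm x)).
have Im_le : `|expR x * sin y - y| <= (expR 1 + 1) * r2.
  have -> : expR x * sin y - y = (expR x - 1) * sin y + (sin y - y) by ring.
  rewrite (le_trans (ler_normD _ _)) // normrM mulrDl mul1r.
  apply: lerD.
    apply: (le_trans (ler_pM _ _ (ler_norm_expR_sub1 x) (ler_norm_sin y))); rewrite ?normr_ge0 //.
    rewrite -mulrA (le_trans _ (ler_wpM2l (expR_ge0 1) xyr)) //.
    by rewrite ler_wpM2r ?mulr_ge0 ?normr_ge0.
  apply: (le_trans (ler_norm_sin_subid y)); apply: le_trans yr.
  by rewrite exprS ler_piMl ?exprn_ge0.
apply: (le_trans (normc_complex_le _ _)).
rewrite subr0 mulr2n; lra.
Qed.

End ComplexExponential.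

Section ComplexDifferentiability.
Variable R : realType.

Lemma cdifferentiable_at_quadratic (f : R[i] -> R[i]) (z0 L : R[i]) (r K : R) :
  0 < r -> 0 <= K ->
  (forall h, normc h <= r -> normc (f (z0 + h) - f z0 - L * h) <= K * normc h ^+ 2) ->
  cdifferentiable_at f z0.
Proof.
move=> r0 K0 fL; exists L => eps eps0.
have K1 : 0 < K + 1 by rewrite ltr_wpDl.
exists (Num.min r (eps / (K + 1))); split=> [|h h0]; first by rewrite lt_min r0 divr_gt0.
rewrite !ltc_normc lt_min => /andP[/ltW hr heps].
have t0 := normc_gt0 h0.
have -> : (f (z0 + h) - f z0) / h - L = (f (z0 + h) - f z0 - L * h) / h by field.
rewrite normcM normcV ltr_pdivrMr //; apply: le_lt_trans (fL h hr) _.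
rewrite expr2 mulrA ltr_pM2r // (le_lt_trans (y := K * (eps / (K + 1)))) //.
  by rewrite ler_wpM2l // ltW.
by rewrite mulrA ltr_pdivrMr // mulrC ltr_pM2l // ltrDl.
Qed.

Lemma cdifferentiable_cexp_mul_sqr (c z0 : R[i]) :
  cdifferentiable_at (fun z => cexp (c * z ^+ 2)) z0.
Proof.
pose E := cexp (c * z0 ^+ 2).
pose B := normc c * (normc z0 *+ 2 + 1).
pose M : R := expR 1 *+ 2 + 1.
have B0 : 0 <= B by rewrite mulr_ge0 ?normc_ge0 ?addr_ge0 ?mulr_ge0 ?normc_ge0.
have M0 : 0 <= M by rewrite addr_ge0 ?mulrn_wge0 ?expR_ge0.
apply: (@cdifferentiable_at_quadratic _ _ (2%:R * c * z0 * E)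
  (Num.min 1 (B + 1)^-1) (normc E * (M * B ^+ 2 + normc c))).
- by rewrite lt_min ltr01 invr_gt0 ltr_wpDl.
- by rewrite mulr_ge0 ?normc_ge0 // addr_ge0 ?normc_ge0 // mulr_ge0 // sqr_ge0.
move=> h; rewrite le_min => /andP[h1 hB].
pose u := c * (z0 * h *+ 2 + h ^+ 2).
have -> : cexp (c * (z0 + h) ^+ 2) - E - 2%:R * c * z0 * E * h =
    E * ((cexp u - 1 - u) + c * h ^+ 2).
  have -> : c * (z0 + h) ^+ 2 = c * z0 ^+ 2 + u by rewrite /u; ring.
  by rewrite cexpD -/E /u; ring.
have hu : normc u <= B * normc h.
  rewrite normcM /B -[normc c * _ * _]mulrA ler_wpM2l ?normc_ge0 //.
  apply: (le_trans (le_normcD _ _)); rewrite normcMn !normcM mulrDl mul1r.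
  rewrite mulrnAl lerD //.
  exact: ler_piMl (normc_ge0 h) h1.
have hu1 : normc u <= 1.
  apply: (le_trans hu); rewrite -(@mulfV _ (B + 1)) ?gt_eqF ?ltr_wpDl //.
  by apply: ler_pM; rewrite ?normc_ge0 ?lerDl ?ler01.
rewrite normcM -mulrA ler_wpM2l ?normc_ge0 //.
apply: (le_trans (le_normcD _ _)); rewrite mulrDl -mulrA lerD //.
  apply: (le_trans (normc_cexp_sub1_subid hu1)); rewrite ler_wpM2l // -exprMn.
  by rewrite !expr2; apply: ler_pM; rewrite ?normc_ge0.
by rewrite !normcM expr2.
Qed.

End ComplexDifferentiability.

Section RBFWeyl.
Variables (R : realType) (gamma : R).
Implicit Types (a z : R[i]) (f : R[i] -> R[i]).

Definition RBF_Weyl_exponent a z : R[i] :=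
  (a ^+ 2 - `|a| ^+ 2) / (gamma ^+ 2)%:C + 2%:R * z * (a^* - a) / (gamma ^+ 2)%:C.

Lemma RBF_WeylE a f z : gamma != 0 ->
  RBF_Weyl gamma a f z = cexp (RBF_Weyl_exponent a z) * f (z - a).
Proof.
move=> g0; rewrite /RBF_Weyl /M_RBF_inv /Weyl /M_RBF.
have -> : RBF_Weyl_exponent a z = - (z ^+ 2 / (gamma ^+ 2)%:C)
    + ((z - a) ^+ 2 / (gamma ^+ 2)%:C
    + (2 / gamma ^+ 2)%:C * (z * a^* - `|a| ^+ 2 / 2%:R)).
  have -> : (2 / gamma ^+ 2)%:C = 2%:R / (gamma ^+ 2)%:C :> R[i].
    by rewrite rmorphM /= fmorphV /= rmorph_nat.
  by rewrite /RBF_Weyl_exponent; field; rewrite fmorph_eq0.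
by rewrite !cexpD; ring.
Qed.

Lemma RBF_Weyl_exponent_real a z : complex.Im a = 0 -> RBF_Weyl_exponent a z = 0.
Proof.
case: a => p q /= ->; rewrite /RBF_Weyl_exponent -add_Re2_Im2 /=.
have -> : (p +i* 0)^* - p +i* 0 = 0 by apply/eqP; rewrite eq_complex /=; simpc.
have -> : (p +i* 0) ^+ 2 - (p ^+ 2 + 0 ^+ 2)%:C = 0.
  by apply/eqP; rewrite eq_complex /=; simpc; rewrite andbT; apply/eqP; ring.
by rewrite mulr0 !mul0r addr0.
Qed.

Lemma Re_RBF_Weyl_exponent0 a :
  complex.Re (RBF_Weyl_exponent a 0) = - (complex.Im a ^+ 2 *+ 2) / gamma ^+ 2.
Proof.
rewrite /RBF_Weyl_exponent mulr0 !mul0r addr0 -fmorphV -add_Re2_Im2.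
by case: a => p q /=; simpc; ring.
Qed.

End RBFWeyl.

Section GaussianInH.
Variables (R : realType) (gamma : R).
Hypothesis gamma_gt0 : 0 < gamma.

Definition gaussian (z : R[i]) : R[i] := cexp (- (z ^+ 2 / (gamma ^+ 2)%:C)).

Lemma entire_gaussian : entire gaussian.
Proof.
have -> : gaussian = fun z => cexp (- ((gamma ^+ 2)%:C)^-1 * z ^+ 2).
  by apply/funext => z; rewrite /gaussian mulNr mulrC.
exact: cdifferentiable_cexp_mul_sqr.
Qed.

(* [|gaussian (x +i* y)|^2] times the weight of [H_gamma] is
   [exp (-2 (x^2 + y^2) / gamma^2)], a product of two centred normal densities
   of standard deviation [gamma / 2]. *)
Let sigma := gamma / 2.

Lemma H_weight_gaussian (x y : R) :
  H_weight gamma gaussian (x, y) =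
  2 / (pi * gamma ^+ 2) / normal_peak sigma ^+ 2 *
  normal_pdf 0 sigma x * normal_pdf 0 sigma y.
Proof.
have s0 : sigma != 0 by rewrite mulf_neq0 ?gt_eqF ?invr_gt0.
have p0 : normal_peak sigma != 0 by rewrite gt_eqF ?normal_peak_gt0.
rewrite /H_weight /gaussian sqr_Re_Im_cexp /cplx_of /= /normal_pdf (negbTE s0).
rewrite /normal_fun -expRM_natr -mulrA -expRD.
transitivity (2 / (pi * gamma ^+ 2) * expR (- (x - 0) ^+ 2 / (sigma ^+ 2 *+ 2) +
    - (y - 0) ^+ 2 / (sigma ^+ 2 *+ 2))).
  by congr (_ * expR _); rewrite /sigma -mulr_natr; field; rewrite gt_eqF.
(* abstracting [pi] keeps the side condition of [field] in a form [gt_eqF] matches *)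
rewrite expRD; move: (@pi R) (@pi_gt0 R) => P P0.
by field; rewrite p0 !gt_eqF.
Qed.

Section Integral.
Local Open Scope ereal_scope.
Lemma integral_H_weight_gaussian :
  \int[(@lebesgue_measure R) \x (@lebesgue_measure R)]_(p in setT)
     (H_weight gamma gaussian p)%:E =
   (2 / (pi * gamma ^+ 2) / normal_peak sigma ^+ 2)%R%:E.
Proof.
set K := (2 / (pi * gamma ^+ 2) / normal_peak sigma ^+ 2)%R.
have K0 : (0 <= K)%R by rewrite divr_ge0 ?sqr_ge0 // divr_ge0 // mulr_ge0 ?pi_ge0 ?sqr_ge0.
set g := normal_pdf 0%R sigma.
have g0 x : (0 <= g x)%R by exact: normal_pdf_ge0.
have mg : measurable_fun setT g by exact: measurable_normal_pdf.
have -> : (fun p => (H_weight gamma gaussian p)%:E) = (fun p => (K * g p.1 * g p.2)%R%:E).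
  by apply/funext => -[x y]; rewrite H_weight_gaussian.
rewrite fubini_tonelli1 /fubini_F /=; last 2 first.
- apply/measurable_EFinP; apply: measurable_funM; last exact: measurableT_comp mg measurable_snd.
  by apply: measurable_funM => //; exact: measurableT_comp mg measurable_fst.
- by move=> p; rewrite lee_fin (mulr_ge0 (mulr_ge0 K0 (g0 _))).
have inner x : \int[lebesgue_measure]_y (K * g x * g y)%R%:E = (K * g x)%R%:E.
  under eq_integral do rewrite EFinM.
  rewrite ge0_integralZl_EFin ?integral_normal_pdf ?mule1 //.
  - by move=> y _; rewrite lee_fin.
  - exact/measurable_EFinP.
  - exact: mulr_ge0.
under eq_integral do rewrite inner EFinM.
rewrite ge0_integralZl_EFin ?integral_normal_pdf ?mule1 //.
- by move=> y _; rewrite lee_fin.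
- exact/measurable_EFinP.
Qed.
End Integral.

Lemma in_H_gaussian : in_H gamma gaussian.
Proof. by split; [exact: entire_gaussian | rewrite integral_H_weight_gaussian ltry]. Qed.

End GaussianInH.

Theorem mainTheorem17 (R : realType) (gamma : R) (a : R[i]) :
  0 < gamma ->
  (forall f : R[i] -> R[i], in_H gamma f -> forall z : R[i],
     RBF_Weyl gamma a f z =
     cexp ((a ^+ 2 - `|a| ^+ 2) / (gamma ^+ 2)%:C
           + 2%:R * z * (a^* - a) / (gamma ^+ 2)%:C) * f (z - a))
  /\
  ((forall f : R[i] -> R[i], in_H gamma f -> RBF_Weyl gamma a f = transl a f)
     <-> complex.Im a = 0).
Proof.
move=> gamma_gt0; have gamma_neq0 : gamma != 0 by rewrite gt_eqF.
split=> [f _ z|]; first exact: RBF_WeylE.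
split=> [Weyl_transl|Im_a0 f _]; last first.
  apply/funext => z.
  by rewrite /transl RBF_WeylE // RBF_Weyl_exponent_real // cexp0 mul1r.
have := congr1 (fun F => F 0) (Weyl_transl _ (in_H_gaussian gamma_gt0)).
rewrite /transl RBF_WeylE // -[X in _ = X]mul1r => /(mulIf (cexp_neq0 _)).
move=> /cexp_eq1; rewrite Re_RBF_Weyl_exponent0 => /eqP.
rewrite mulf_eq0 invr_eq0 expf_eq0 (negbTE gamma_neq0) andbF orbF oppr_eq0.
by rewrite mulrn_eq0 /= expf_eq0 /= => /eqP.
Qed.
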